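(* Let $n\ge 2$. Let $Br^n$ be the classical $n$-strand (Artin) braid group with generators $\sigma_1,\dots,\sigma_{n-1}$, and let $Br_2^n$ be the $n$-strand $\mathbb{Z}_2$-braid group (defined in the context). Consider the map $Br^n\to Br_2^n$ sending each braid word in $\sigma_i^{\pm1}$ to the word obtained by replacing each $\sigma_i^{\pm1}$ by $\sigma_{i,0}^{\pm1}$ (i.e. a classical braid is regarded as a $\mathbb{Z}_2$-braid all of whose crossings are even). If two classical braids $\gamma_1,\gamma_2\in Br^n$ have equal images in $Br_2^n$, then $\gamma_1=\gamma_2$ in $Br^n$.
   Context: The classical braid group $Br^n$ has generators $\sigma_1,\dots,\sigma_{n-1}$ and relations $\sigma_i\sigma_j=\sigma_j\sigma_i$ for $|i-j|\ge 2$ and $\sigma_i\sigma_{i+1}\sigma_i=\sigma_{i+1}\sigma_i\sigma_{i+1}$ for $1\le i\le n-2$. The $n$-strand $\mathbb{Z}_2$-braid group $Br_2^n$ is the group with generators $\sigma_{i,0},\sigma_{i,1}$, $i=1,\dots,n-1$, and relations $\sigma_{i,\varepsilon}\sigma_{j,\eta}=\sigma_{j,\eta}\sigma_{i,\varepsilon}$ for all $|i-j|\ge 2$ and all $\varepsilon,\eta\in\{0,1\}$, and $\sigma_{i,\varepsilon}\sigma_{i+1,\eta}\sigma_{i,\xi}=\sigma_{i+1,\xi}\sigma_{i,\eta}\sigma_{i+1,\varepsilon}$ for $1\le i\le n-2$ and all $\varepsilon,\eta,\xi\in\{0,1\}$ with $\varepsilon+\eta+\xi\equiv 0\pmod 2$.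 Generators $\sigma_{i,0}$ are called even, $\sigma_{i,1}$ odd. *)

(* Finitely presented groups are encoded via words and the
   congruence generated by free cancellation and the defining relations. *)
From mathcomp Require Import all_boot.
Set Implicit Arguments. Unset Strict Implicit. Unset Printing Implicit Defensive.

(* A letter is (g, b): b = false means g, b = true means g^-1. *)
Definition word (G : Type) := seq (G * bool).

Inductive weq (G : Type) (R : word G -> word G -> Prop) : word G -> word G -> Prop :=
| weq_refl w : weq R w w
| weq_sym u v : weq R u v -> weq R v u
| weq_trans u v w : weq R u v -> weq R v w -> weq R u w
| weq_ctx a b u v : weq R u v -> weq R (a ++ u ++ b) (a ++ v ++ b)
| weq_inv g e : weq R [:: (g, e); (g, ~~ e)] [::]
| weq_rel u v : R u v -> weq R u v.

(* Classical braid group Br^n: generator i : 'I_(n.-1) stands for sigma_(i+1). *)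
Definition braid_rel (n : nat) (u v : word 'I_(n.-1)) : Prop :=
  (exists i j : 'I_(n.-1), ((i + 2 <= j) || (j + 2 <= i))%N /\
     u = [:: (i, false); (j, false)] /\ v = [:: (j, false); (i, false)])
  \/
  (exists i j : 'I_(n.-1), val j = (val i).+1 /\
     u = [:: (i, false); (j, false); (i, false)] /\
     v = [:: (j, false); (i, false); (j, false)]).

(* Z2-braid group Br_2^n: generator (i, e) stands for sigma_(i+1, e)
   (e = false: even, e = true: odd). *)
Definition z2braid_rel (n : nat) (u v : word ('I_(n.-1) * bool)) : Prop :=
  (exists (i j : 'I_(n.-1)) (e h : bool), ((i + 2 <= j) || (j + 2 <= i))%N /\
     u = [:: ((i, e), false); ((j, h), false)] /\
     v = [:: ((j, h), false); ((i, e), false)])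
  \/
  (exists (i j : 'I_(n.-1)) (e h x : bool), val j = (val i).+1 /\
     (e (+) h (+) x) = false /\
     u = [:: ((i, e), false); ((j, h), false); ((i, x), false)] /\
     v = [:: ((j, x), false); ((i, h), false); ((j, e), false)]).

Definition BrEq (n : nat) := weq (@braid_rel n).
Definition Br2Eq (n : nat) := weq (@z2braid_rel n).

Definition even_embed (n : nat) (w : word 'I_(n.-1)) : word ('I_(n.-1) * bool) :=
  map (fun l => ((l.1, false), l.2)) w.

From mathcomp Require Import all_boot.
Set Implicit Arguments. Unset Strict Implicit. Unset Printing Implicit Defensive.

(* Forgetting the parity of each crossing sends every Z2-braid relation to a
   classical braid relation, so it induces a homomorphism Br_2^n -> Br^n that
   is a left inverse of the even embedding. *)

Definition map_word (G H : Type) (f : G -> H) (w : word G) : word H :=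
  map (fun l => (f l.1, l.2)) w.

Lemma map_word_cat (G H : Type) (f : G -> H) (u v : word G) :
  map_word f (u ++ v) = map_word f u ++ map_word f v.
Proof. exact: map_cat. Qed.

Lemma map_word_comp (G H K : Type) (f : G -> H) (g : H -> K) (w : word G) :
  map_word g (map_word f w) = map_word (g \o f) w.
Proof. by rewrite /map_word -map_comp. Qed.

Lemma map_word_id (G : Type) (w : word G) : map_word id w = w.
Proof. by elim: w => //= [[a b] w ->]. Qed.

Section WeqMorphism.

Variables (G H : Type) (R : word G -> word G -> Prop) (S : word H -> word H -> Prop).
Variable f : G -> H.
Hypothesis f_rel : forall u v, R u v -> S (map_word f u) (map_word f v).

Lemma weq_map_word u v : weq R u v -> weq S (map_word f u) (map_word f v).
Proof.
elim=> {u v} [w | u v _ IH | u v w _ IH1 _ IH2 | a b u v _ IH | g e | u v /f_rel].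
- exact: weq_refl.
- exact: weq_sym.
- exact: weq_trans IH1 IH2.
- by rewrite !map_word_cat; apply: weq_ctx.
- exact: weq_inv.
- exact: weq_rel.
Qed.

End WeqMorphism.

Lemma z2braid_rel_forget_parity (n : nat) (u v : word ('I_(n.-1) * bool)) :
  z2braid_rel u v -> braid_rel (map_word fst u) (map_word fst v).
Proof.
case=> [[i [j [e [h [Hij [-> ->]]]]]] | [i [j [e [h [x [Hij [_ [-> ->]]]]]]]]].
- by left; exists i, j.
- by right; exists i, j.
Qed.

Lemma forget_parity_even_embed (n : nat) (w : word 'I_(n.-1)) :
  map_word fst (even_embed w) = w.
Proof.
rewrite (_ : even_embed w = map_word (fun i => (i, false)) w) //.
by rewrite map_word_comp map_word_id.
Qed.

Theorem theorem1 (n : nat) (hn : (2 <= n)%N) (w1 w2 : word 'I_(n.-1)) :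
  Br2Eq (even_embed w1) (even_embed w2) -> BrEq w1 w2.
Proof.
move=> /(weq_map_word (@z2braid_rel_forget_parity n)).
by rewrite !forget_parity_even_embed.
Qed.
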